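(* Let $p:\mathcal{Q}\to\mathcal{C}$ be a functor of categories. If $p$ is ULF, then the functor of operads $\mathcal{W}(p):\mathcal{W}(\mathcal{Q})\to\mathcal{W}(\mathcal{C})$ is ULF; and if $p$ is finitary, then $\mathcal{W}(p)$ is finitary.
   Context: Composition in categories is written diagrammatically. Operads are colored (non-symmetric) operads/multicategories: operations $f:A_1,\dots,A_n\to A$ with partial compositions $g\circ_i h$ (plugging $h$ into the $i$-th input of $g$) and identities. For a category $\mathcal{C}$, the operad of spliced arrows $\mathcal{W}(\mathcal{C})$ has as colors pairs $(A,B)$ of objects of $\mathcal{C}$; an $n$-ary operation $(A_1,B_1),\dots,(A_n,B_n)\to(A,B)$ is a sequence $w_0\text{-}w_1\text{-}\cdots\text{-}w_n$ of arrows $w_0:A\to A_1$, $w_i:B_i\to A_{i+1}$ for $1\le i<n$, and $w_n:B_n\to B$ (for $n=0$, a single arrow $w_0:A\to B$, so constants of color $(A,B)$ are arrows $A\to B$). Partial composition is $(w_0\text{-}\cdots\text{-}w_n)\circ_i(u_0\text{-}\cdots\text{-}u_m)=w_0\text{-}\cdots\text{-}w_{i-2}\text{-}(w_{i-1}u_0)\text{-}u_1\text{-}\cdots\text{-}u_{m-1}\text{-}(u_m w_i)\text{-}w_{i+1}\text{-}\cdots\text{-}w_n$, and the identity on $(A,B)$ is $\mathrm{id}_A\text{-}\mathrm{id}_B$. For a functor $p$, $\mathcal{W}(p)$ sends $(q,q')\mapsto(p(q),p(q'))$ and $w_0\text{-}\cdots\text{-}w_n\mapsto p(w_0)\text{-}\cdots\text{-}p(w_n)$.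 A functor of categories $p$ is ULF if for every arrow $\alpha$ and arrows $u,v$ with $p(\alpha)=uv$ there is a unique pair $\beta,\gamma$ with $\alpha=\beta\gamma$, $p(\beta)=u$, $p(\gamma)=v$. A functor of operads $p:\mathcal{D}\to\mathcal{O}$ is ULF if for every operation $\alpha$ of $\mathcal{D}$ and operations $g,h$ of $\mathcal{O}$ and index $i$ with $p(\alpha)=g\circ_i h$ there is a unique pair of operations $\beta,\gamma$ of $\mathcal{D}$ with $\alpha=\beta\circ_i\gamma$, $p(\beta)=g$, $p(\gamma)=h$. A functor (of categories or operads) is finitary if the fiber over each object/color and the fiber over each arrow/operation is finite. *)

From Stdlib Require Import List.
Import ListNotations.
Set Implicit Arguments.
Unset Strict Implicit.

(** * Categories (composition written diagrammatically: [ccomp f g] = "f then g") *)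
Record Category := {
  Ob : Type;
  Hom : Ob -> Ob -> Type;
  cid : forall A, Hom A A;
  ccomp : forall A B C, Hom A B -> Hom B C -> Hom A C;
  ccomp_id_l : forall A B (f : Hom A B), ccomp (cid A) f = f;
  ccomp_id_r : forall A B (f : Hom A B), ccomp f (cid B) = f;
  ccomp_assoc : forall A B C D (f : Hom A B) (g : Hom B C) (h : Hom C D),
      ccomp (ccomp f g) h = ccomp f (ccomp g h)
}.
Arguments Hom : clear implicits.
Arguments cid {c} A.
Arguments ccomp {c A B C} _ _.

Record Functor (Q C : Category) := {
  fob : Ob Q -> Ob C;
  fhom : forall A B, Hom Q A B -> Hom C (fob A) (fob B);
  fhom_id : forall A, fhom (cid A) = cid (fob A);
  fhom_comp : forall A B D (f : Hom Q A B) (g : Hom Q B D),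
      fhom (ccomp f g) = ccomp (fhom f) (fhom g)
}.
Arguments fob {Q C} _ _.
Arguments fhom {Q C} _ {A B} _.

Definition Arr (C : Category) := { ab : Ob C * Ob C & Hom C (fst ab) (snd ab) }.
Definition mkArr (C : Category) (A B : Ob C) (f : Hom C A B) : Arr C :=
  existT (fun ab => Hom C (fst ab) (snd ab)) (A, B) f.
Definition arrmap Q C (p : Functor Q C) (x : Arr Q) : Arr C :=
  mkArr (fhom p (projT2 x)).

Definition ULF_functor Q C (p : Functor Q C) : Prop :=
  forall (a b : Ob Q) (alpha : Hom Q a b) (M : Ob C)
         (u : Hom C (fob p a) M) (v : Hom C M (fob p b)),
    fhom p alpha = ccomp u v ->
    let P := fun s : { m : Ob Q & (Hom Q a m * Hom Q m b)%type } =>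
      ccomp (fst (projT2 s)) (snd (projT2 s)) = alpha /\
      mkArr (fhom p (fst (projT2 s))) = mkArr u /\
      mkArr (fhom p (snd (projT2 s))) = mkArr v in
    exists s, P s /\ forall s', P s' -> s' = s.

Definition finite_fiber (X Y : Type) (f : X -> Y) (y : Y) : Prop :=
  exists l : list X, forall x, f x = y -> In x l.

Definition finitary_functor Q C (p : Functor Q C) : Prop :=
  (forall X : Ob C, finite_fiber (fob p) X) /\
  (forall x : Arr C, finite_fiber (arrmap p) x).

(** Partial composition [g o_i h] with i = size l1 + 1 is
    [ocomp g h] for g : Op (l1 ++ c :: l2) out, h : Op l' c. *)
Record OperadData := {
  Col : Type;
  Op : list Col -> Col -> Type;
  oid : forall c, Op [c] c;
  ocomp : forall (l1 : list Col) (c : Col) (l2 : list Col) (out : Col) (l' : list Col),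
      Op (l1 ++ c :: l2) out -> Op l' c -> Op (l1 ++ l' ++ l2) out
}.
Arguments Op : clear implicits.
Arguments oid {o} c.
Arguments ocomp {o l1 c l2 out l'} _ _.

Definition TotOp (O : OperadData) :=
  { io : list (Col O) * Col O & Op O (fst io) (snd io) }.
Definition mkOp (O : OperadData) (l : list (Col O)) (c : Col O) (x : Op O l c) : TotOp O :=
  existT (fun io => Op O (fst io) (snd io)) (l, c) x.

Record OperadMor (D O : OperadData) := {
  fcol : Col D -> Col O;
  fop : forall l c, Op D l c -> Op O (map fcol l) (fcol c)
}.
Arguments fcol {D O} _ _.
Arguments fop {D O} _ {l c} _.

Definition opmap D O (p : OperadMor D O) (x : TotOp D) : TotOp O :=
  mkOp (fop p (projT2 x)).

(** The index i is
    encoded as the length of the prefix l1 of inputs before the plugged one. *)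
Definition ULF_opmor D O (p : OperadMor D O) : Prop :=
  forall (l : list (Col D)) (out : Col D) (alpha : Op D l out)
         (L1 : list (Col O)) (c : Col O) (L2 : list (Col O)) (o : Col O)
         (L' : list (Col O)) (g : Op O (L1 ++ c :: L2) o) (h : Op O L' c),
    mkOp (fop p alpha) = mkOp (ocomp g h) ->
    let S := { x : list (Col D) * Col D * list (Col D) * Col D * list (Col D) &
               (Op D (fst (fst (fst (fst x))) ++ snd (fst (fst (fst x))) :: snd (fst (fst x)))
                     (snd (fst x))
                * Op D (snd x) (snd (fst (fst (fst x)))))%type } in
    let P := fun s : S =>
      length (fst (fst (fst (fst (projT1 s))))) = length L1 /\
      mkOp (ocomp (fst (projT2 s)) (snd (projT2 s))) = mkOp alpha /\
      mkOp (fop p (fst (projT2 s))) = mkOp g /\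
      mkOp (fop p (snd (projT2 s))) = mkOp h in
    exists s, P s /\ forall s', P s' -> s' = s.

Definition finitary_opmor D O (p : OperadMor D O) : Prop :=
  (forall c : Col O, finite_fiber (fcol p) c) /\
  (forall x : TotOp O, finite_fiber (opmap p) x).

Section Spliced.
Variable C : Category.

(** [chain A B [(A1,B1);...;(An,Bn)]] = sequences w0-w1-...-wn with
    w0 : A -> A1, wi : Bi -> A(i+1), wn : Bn -> B. *)
Inductive chain : Ob C -> Ob C -> list (Ob C * Ob C) -> Type :=
| ch0 : forall A B, Hom C A B -> chain A B []
| chS : forall A B A1 B1 l, Hom C A A1 -> chain B1 B l -> chain A B ((A1, B1) :: l).

Definition chain_hd A B A1 B1 l (x : chain A B ((A1, B1) :: l)) : Hom C A A1 :=
  match x in chain A0 B0 l0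
        return match l0 with [] => unit | (A2, _) :: _ => Hom C A0 A2 end with
  | ch0 _ => tt
  | chS w _ => w
  end.

Definition chain_tl A B A1 B1 l (x : chain A B ((A1, B1) :: l)) : chain B1 B l :=
  match x in chain A0 B0 l0
        return match l0 with [] => unit | (_, B2) :: l3 => chain B2 B0 l3 end with
  | ch0 _ => tt
  | chS _ r => r
  end.

Definition chain_pre A A' B l (f : Hom C A A') (x : chain A' B l) : chain A B l :=
  match x in chain A0 B0 l0 return Hom C A A0 -> chain A B0 l0 with
  | ch0 w => fun f => ch0 (ccomp f w)
  | chS w r => fun f => chS (ccomp f w) r
  end f.

Fixpoint chain_glue X Y B l' (x : chain X Y l') : forall l2, chain Y B l2 -> chain X B (l' ++ l2) :=
  match x in chain X0 Y0 l0 return forall l2, chain Y0 B l2 -> chain X0 B (l0 ++ l2) with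
  | ch0 u => fun l2 y => chain_pre u y
  | chS u r => fun l2 y => chS u (chain_glue r y)
  end.

Fixpoint wcomp (l1 : list (Ob C * Ob C)) (C1 C2 : Ob C) (l2 l' : list (Ob C * Ob C))
  : forall A B, chain A B (l1 ++ (C1, C2) :: l2) -> chain C1 C2 l' -> chain A B (l1 ++ l' ++ l2) :=
  match l1 return forall A B, chain A B (l1 ++ (C1, C2) :: l2) -> chain C1 C2 l' ->
                              chain A B (l1 ++ l' ++ l2) with
  | [] => fun A B g h => chain_pre (chain_hd g) (chain_glue h (chain_tl g))
  | (X1, X2) :: l1' => fun A B g h =>
      chS (chain_hd g) (wcomp (chain_tl g) h)
  end.

Definition W_Op (l : list (Ob C * Ob C)) (c : Ob C * Ob C) : Type := chain (fst c) (snd c) l.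

Definition W_id (c : Ob C * Ob C) : W_Op [c] c :=
  match c return W_Op [c] c with
  | (A, B) => chS (cid A) (ch0 (cid B))
  end.

Definition W_comp (l1 : list (Ob C * Ob C)) (c : Ob C * Ob C) (l2 : list (Ob C * Ob C))
  (out : Ob C * Ob C) (l' : list (Ob C * Ob C)) :
  W_Op (l1 ++ c :: l2) out -> W_Op l' c -> W_Op (l1 ++ l' ++ l2) out :=
  match c return W_Op (l1 ++ c :: l2) out -> W_Op l' c -> W_Op (l1 ++ l' ++ l2) out with
  | (C1, C2) => fun g h => wcomp g h
  end.

Definition W : OperadData :=
  {| Col := Ob C * Ob C; Op := W_Op; oid := W_id; ocomp := W_comp |}.

End Spliced.

Arguments chain : clear implicits.
Arguments W_Op : clear implicits.
Arguments W_id : clear implicits.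
Arguments W_comp : clear implicits.
Arguments wcomp : clear implicits.
Arguments ch0 {C A B} _.
Arguments chS {C A B A1 B1 l} _ _.

Section SplicedMap.
Variables (Q C : Category) (p : Functor Q C).

Definition pcol (x : Ob Q * Ob Q) : Ob C * Ob C := (fob p (fst x), fob p (snd x)).

Fixpoint chain_map A B l (x : chain Q A B l) : chain C (fob p A) (fob p B) (map pcol l) :=
  match x in chain _ A0 B0 l0 return chain C (fob p A0) (fob p B0) (map pcol l0) with
  | ch0 w => ch0 (fhom p w)
  | chS w r => chS (fhom p w) (chain_map r)
  end.

Definition W_map : OperadMor (W Q) (W C) :=
  @Build_OperadMor (W Q) (W C) pcol (fun l c (x : W_Op Q l c) => chain_map x).

End SplicedMap.

From Stdlib Require Import List Eqdep.
Import ListNotations.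
Set Implicit Arguments.
Unset Strict Implicit.

(** An operation [w0-...-wn] of W(C) is determined by its list of arrows
    [[w0; ...; wn]], and [g o_i h] acts on arrow lists by composing two pairs
    of adjacent arrows, [w(i-1) u0] and [um wi] (a single triple composite
    [w(i-1) u0 wi] when [m = 0]).  Written as a relation on arrow lists, each
    of these factorisations lifts uniquely along a ULF functor, and so do the
    arrow lists of [g] and [h].  For finiteness, the fibre of W(p) over an
    operation embeds into the product of the fibres of p over its arrows. *)

Lemma cons_inj (T : Type) (a b : T) l l' : a :: l = b :: l' -> a = b /\ l = l'.
Proof. intro E. split; [exact (f_equal (hd a) E) | exact (f_equal (@tl T) E)]. Qed.

Lemma app_cons_inj (T : Type) (l1 : list T) : forall l1' a a' l2 l2',
  length l1 = length l1' -> l1 ++ a :: l2 = l1' ++ a' :: l2' ->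
  l1 = l1' /\ a = a' /\ l2 = l2'.
Proof.
  induction l1 as [|x l1 IH]; intros [|y l1'] a a' l2 l2' Hl E; try discriminate;
    simpl in E; apply cons_inj in E as [-> E].
  - auto.
  - injection Hl as Hl. destruct (IH _ _ _ _ _ Hl E) as (-> & -> & ->). auto.
Qed.

Section Arrows.
Variable C : Category.

Definition arr_src (a : Arr C) : Ob C := fst (projT1 a).
Definition arr_tgt (a : Arr C) : Ob C := snd (projT1 a).

Lemma mkArr_ends X Y X' Y' (f : Hom C X Y) (f' : Hom C X' Y') :
  mkArr f = mkArr f' -> X = X' /\ Y = Y'.
Proof. intro E. apply (f_equal (@projT1 _ _)) in E. injection E. auto. Qed.

Lemma mkArr_inj X Y (f f' : Hom C X Y) : mkArr f = mkArr f' -> f = f'.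
Proof. apply inj_pair2. Qed.

End Arrows.

Ltac mkArr_inv E :=
  let eX := fresh in let eY := fresh in
  destruct (mkArr_ends E) as [eX eY]; subst; apply mkArr_inj in E; subst.

Section ArrowLists.
Variable C : Category.

Inductive arr_comp : Arr C -> Arr C -> Arr C -> Prop :=
  | ArrComp X Y Z (f : Hom C X Y) (g : Hom C Y Z) :
      arr_comp (mkArr f) (mkArr g) (mkArr (ccomp f g)).

Lemma arr_comp_inv u v w : arr_comp u v w ->
  exists X Y Z (f : Hom C X Y) (g : Hom C Y Z),
    u = mkArr f /\ v = mkArr g /\ w = mkArr (ccomp f g).
Proof. destruct 1. eauto 10. Qed.

Lemma arr_comp_fun (u v w w' : Arr C) : arr_comp u v w -> arr_comp u v w' -> w = w'.
Proof.
  destruct 1 as [X Y Z f g]. intro H.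
  apply arr_comp_inv in H as (X' & Y' & Z' & f' & g' & Ef & Eg & ->).
  mkArr_inv Ef. mkArr_inv Eg. reflexivity.
Qed.

Lemma arr_comp_ends (u v w : Arr C) : arr_comp u v w ->
  arr_tgt u = arr_src v /\ arr_src w = arr_src u.
Proof. destruct 1. simpl. auto. Qed.

Fixpoint arrows X Y l (x : chain C X Y l) : list (Arr C) :=
  match x with ch0 w => [mkArr w] | chS w r => mkArr w :: arrows r end.

Lemma arrows_inj X Y l (x : chain C X Y l) :
  forall X' Y' l' (y : chain C X' Y' l'),
  arrows x = arrows y -> @mkOp (W C) l (X, Y) x = @mkOp (W C) l' (X', Y') y.
Proof.
  induction x as [A B w | A B A1 B1 l w x IH]; intros X' Y' l' y E;
    destruct y as [A' B' w' | A' B' A1' B1' l' w' y]; apply cons_inj in E as [Ew E].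
  - mkArr_inv Ew. reflexivity.
  - destruct y; discriminate.
  - destruct x; discriminate.
  - specialize (IH _ _ _ y E).
    pose proof (f_equal (@projT1 _ _) IH) as I. injection I as -> -> ->.
    apply inj_pair2 in IH. subst. mkArr_inv Ew. reflexivity.
Qed.

Definition op_arrows l c (x : Op (W C) l c) : list (Arr C) :=
  arrows (x : chain C (fst c) (snd c) l).

Lemma op_arrows_inj l c (x : Op (W C) l c) l' c' (y : Op (W C) l' c') :
  op_arrows x = op_arrows y -> mkOp x = mkOp y.
Proof. destruct c, c'. apply arrows_inj. Qed.

Lemma mkOp_op_arrows l c (x : Op (W C) l c) l' c' (y : Op (W C) l' c') :
  mkOp x = mkOp y -> op_arrows x = op_arrows y.
Proof. apply (f_equal (fun t : TotOp (W C) => op_arrows (projT2 t))). Qed.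

Fixpoint gaps (a : Arr C) (r : list (Arr C)) : list (Ob C * Ob C) :=
  match r with [] => [] | b :: r' => (arr_tgt a, arr_src b) :: gaps b r' end.

Fixpoint last_arr (a : Arr C) (r : list (Arr C)) : Arr C :=
  match r with [] => a | b :: r' => last_arr b r' end.

(* Spliced arrows need not be composable, so any nonempty list of arrows is
   the arrow list of an operation. *)
Fixpoint chain_of_arrows (a : Arr C) (r : list (Arr C)) {struct r}
  : chain C (arr_src a) (arr_tgt (last_arr a r)) (gaps a r) :=
  match r return chain C (arr_src a) (arr_tgt (last_arr a r)) (gaps a r) with
  | [] => ch0 (projT2 a)
  | b :: r' => chS (projT2 a) (chain_of_arrows b r')
  end.

Lemma arrows_chain_of_arrows r : forall a, arrows (chain_of_arrows a r) = a :: r.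
Proof.
  induction r as [|b r IH]; intros [[X Y] f]; simpl; [reflexivity|].
  rewrite IH. reflexivity.
Qed.

Definition ops_of_arrows (s : list (Arr C)) : list (TotOp (W C)) :=
  match s with
  | [] => []
  | a :: r =>
      [@mkOp (W C) (gaps a r) (arr_src a, arr_tgt (last_arr a r)) (chain_of_arrows a r)]
  end.

Lemma In_ops_of_arrows l c (x : Op (W C) l c) : In (mkOp x) (ops_of_arrows (op_arrows x)).
Proof.
  destruct c as [X Y]. revert x.
  enough (H : forall X Y l (x : chain C X Y l),
    In (@mkOp (W C) l (X, Y) x) (ops_of_arrows (arrows x))) by apply H.
  destruct x; left; apply arrows_inj; simpl; rewrite ?arrows_chain_of_arrows; reflexivity.
Qed.

Inductive pre_comp (x : Arr C) : list (Arr C) -> list (Arr C) -> Prop :=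
  | PreComp y d r : arr_comp x y d -> pre_comp x (y :: r) (d :: r).

Inductive splice : list (Arr C) -> list (Arr C) -> list (Arr C) -> Prop :=
  | splice_one h Y R : pre_comp h Y R -> splice [h] Y R
  | splice_cons h H Y R : splice H Y R -> splice (h :: H) Y (h :: R).

Inductive plug : nat -> list (Arr C) -> list (Arr C) -> list (Arr C) -> Prop :=
  | plug_here g0 G H R K : splice H G R -> pre_comp g0 R K -> plug 0 (g0 :: G) H K
  | plug_later k g G H K : plug k G H K -> plug (S k) (g :: G) H (g :: K).

Lemma arrows_chain_pre X X' Y l (f : Hom C X X') (y : chain C X' Y l) :
  pre_comp (mkArr f) (arrows y) (arrows (chain_pre f y)).
Proof. destruct y; simpl; constructor; constructor. Qed.

Lemma arrows_chain_glue X Y l (h : chain C X Y l) :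
  forall B l2 (y : chain C Y B l2), splice (arrows h) (arrows y) (arrows (chain_glue h y)).
Proof.
  induction h; intros; simpl; constructor; [apply arrows_chain_pre | apply IHh].
Qed.

Lemma arrows_hd_tl X Y A1 B1 l (g : chain C X Y ((A1, B1) :: l)) :
  arrows g = mkArr (chain_hd g) :: arrows (chain_tl g).
Proof.
  enough (H : forall X Y L (x : chain C X Y L),
    match L return chain C X Y L -> Prop with
    | [] => fun _ => True
    | (A2, B2) :: _ => fun x => arrows x = mkArr (chain_hd x) :: arrows (chain_tl x)
    end x) by exact (H _ _ _ g).
  destruct x; simpl; auto.
Qed.

Lemma arrows_wcomp l1 : forall C1 C2 l2 l' X Y
  (g : chain C X Y (l1 ++ (C1, C2) :: l2)) (h : chain C C1 C2 l'),
  plug (length l1) (arrows g) (arrows h) (arrows (wcomp C l1 C1 C2 l2 l' X Y g h)).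
Proof.
  induction l1 as [|[X1 X2] l1 IH]; intros; simpl.
  - rewrite (arrows_hd_tl (g : chain C X Y ((C1, C2) :: l2))).
    econstructor; [apply arrows_chain_glue | apply arrows_chain_pre].
  - rewrite (arrows_hd_tl (g : chain C X Y ((X1, X2) :: l1 ++ (C1, C2) :: l2))).
    constructor. apply IH.
Qed.

Lemma op_arrows_ocomp l1 c l2 out l'
    (g : Op (W C) (l1 ++ c :: l2) out) (h : Op (W C) l' c) :
  plug (length l1) (op_arrows g) (op_arrows h) (op_arrows (ocomp g h)).
Proof. destruct c. apply arrows_wcomp. Qed.

Lemma pre_comp_fun x (R K K' : list (Arr C)) : pre_comp x R K -> pre_comp x R K' -> K = K'.
Proof.
  destruct 1 as [y d r H]. inversion 1; subst. f_equal. eapply arr_comp_fun; eauto.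
Qed.

Lemma splice_fun (H Y R : list (Arr C)) : splice H Y R -> forall R2, splice H Y R2 -> R = R2.
Proof.
  induction 1 as [h Y R HP | h H Y R HS IH]; intros R2;
    inversion 1 as [h' Y' R' HP' | h' H' Y' R' HS']; subst.
  - eapply pre_comp_fun; eauto.
  - inversion HS'.
  - inversion HS.
  - f_equal. auto.
Qed.

Lemma plug_fun k (G H K : list (Arr C)) : plug k G H K -> forall K2, plug k G H K2 -> K = K2.
Proof.
  induction 1 as [g0 G H R K HS HP | k g G H K HP IH]; inversion 1; subst.
  - assert (R = R0) by (eapply splice_fun; eauto). subst. eapply pre_comp_fun; eauto.
  - f_equal. auto.
Qed.

Lemma splice_shape (H Y R : list (Arr C)) : splice H Y R ->
  exists h0 hs y0 ys r0 rs, H = h0 :: hs /\ Y = y0 :: ys /\ R = r0 :: rs /\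
    arr_src r0 = arr_src h0 /\ arr_tgt (last_arr h0 hs) = arr_src y0.
Proof.
  induction 1 as [h Y R [y d r Hc] | h H Y R HS IH].
  - destruct (arr_comp_ends Hc). exists h, [], y, r, d, r. auto 10.
  - destruct IH as (h0 & hs & y0 & ys & r0 & rs & -> & -> & -> & E1 & E2).
    exists h, (h0 :: hs), y0, ys, h, (r0 :: rs). auto 10.
Qed.

Lemma plug_shape k (G H K : list (Arr C)) : plug k G H K ->
  exists g0 gs h0 hs l1 l2, G = g0 :: gs /\ H = h0 :: hs /\
    gaps g0 gs = l1 ++ (arr_src h0, arr_tgt (last_arr h0 hs)) :: l2 /\ length l1 = k.
Proof.
  induction 1 as [g0 G H R K HS HP | k g G H K HP IH].
  - destruct HP as [r0 d rs Hc]. destruct (arr_comp_ends Hc) as [E3 _].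
    destruct (splice_shape HS) as (h0 & hs & y0 & ys & r1 & rs' & -> & -> & ER & E1 & E2).
    apply cons_inj in ER as [<- _].
    exists g0, (y0 :: ys), h0, hs, [], (gaps y0 ys). simpl. rewrite E3, E1, E2. auto.
  - destruct IH as (g0 & gs & h0 & hs & l1 & l2 & -> & -> & E & <-).
    exists g, (g0 :: gs), h0, hs, ((arr_tgt g, arr_src g0) :: l1), l2. simpl.
    rewrite E. auto.
Qed.

End ArrowLists.

Section Image.
Variables (Q C : Category) (p : Functor Q C).
Local Notation P := (arrmap p).

Lemma arrows_chain_map X Y l (x : chain Q X Y l) : arrows (chain_map p x) = map P (arrows x).
Proof. induction x; simpl; f_equal; auto. Qed.

Lemma op_arrows_W_map l c (x : Op (W Q) l c) :
  op_arrows (fop (W_map p) x) = map P (op_arrows x).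
Proof. apply arrows_chain_map. Qed.

Lemma arr_comp_map u v w : arr_comp u v w -> arr_comp (P u) (P v) (P w).
Proof. destruct 1. unfold arrmap; simpl. rewrite fhom_comp. constructor. Qed.

Lemma pre_comp_map x R K : pre_comp x R K -> pre_comp (P x) (map P R) (map P K).
Proof. destruct 1. constructor. apply arr_comp_map. assumption. Qed.

Lemma splice_map H Y R : splice H Y R -> splice (map P H) (map P Y) (map P R).
Proof. induction 1; constructor; auto using pre_comp_map. Qed.

Hypothesis p_ULF : ULF_functor p.

Lemma arr_comp_lift (a : Arr Q) u v : arr_comp u v (P a) ->
  exists b g, arr_comp b g a /\ P b = u /\ P g = v.
Proof.
  destruct a as [[X Z] alpha]. intro H.
  apply arr_comp_inv in H as (X' & Y & Z' & f & g & -> & -> & E).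
  unfold arrmap in E; simpl in E. mkArr_inv E.
  destruct (p_ULF E) as [[M [beta gamma]] [[Ecomp [Eb Eg]] _]]. simpl in *.
  exists (mkArr beta), (mkArr gamma). rewrite <- Ecomp. auto using ArrComp.
Qed.

Lemma arr_comp_lift_unique (a b g b' g' : Arr Q) : arr_comp b g a -> arr_comp b' g' a ->
  P b = P b' -> P g = P g' -> b = b' /\ g = g'.
Proof.
  destruct 1 as [X Y Z f g]. intro H.
  apply arr_comp_inv in H as (X1 & Y1 & Z1 & f1 & g1 & -> & -> & E). mkArr_inv E.
  intros Ef Eg. unfold arrmap in Ef, Eg; simpl in Ef, Eg.
  destruct (p_ULF (fhom_comp p f g)) as [s [_ Hs]].
  assert (E1 : existT _ Y (f, g) = s) by (apply Hs; simpl; auto).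
  assert (E2 : existT _ Y1 (f1, g1) = s) by (apply Hs; simpl; auto).
  rewrite <- E2 in E1. pose proof (f_equal (@projT1 _ _) E1) as EY. simpl in EY. subst.
  apply inj_pair2 in E1. injection E1 as -> ->. auto.
Qed.

Lemma pre_comp_lift x R A : pre_comp x R (map P A) ->
  exists b Rq, pre_comp b Rq A /\ P b = x /\ map P Rq = R.
Proof.
  intro H. remember (map P A) as K eqn:EK. destruct H as [y d r Hc].
  symmetry in EK. apply map_eq_cons in EK as (a & A' & -> & <- & <-).
  destruct (arr_comp_lift Hc) as (b & g & Hbg & <- & <-).
  exists b, (g :: A'). split; [constructor|]; auto.
Qed.

Lemma pre_comp_lift_unique b Rq b' Rq' A : pre_comp b Rq A -> pre_comp b' Rq' A ->
  P b = P b' -> map P Rq = map P Rq' -> b = b' /\ Rq = Rq'.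
Proof.
  destruct 1 as [y d r Hc]. inversion 1; subst. intros Eb ER.
  apply cons_inj in ER as [Ey _].
  destruct (arr_comp_lift_unique Hc H2 Eb Ey). subst. auto.
Qed.

Lemma splice_lift H Y R : splice H Y R -> forall A, R = map P A ->
  exists Hq Yq, splice Hq Yq A /\ map P Hq = H /\ map P Yq = Y.
Proof.
  induction 1 as [h Y R HP | h H Y R HS IH]; intros A EA; subst.
  - destruct (pre_comp_lift HP) as (b & Rq & H1 & <- & <-).
    exists [b], Rq. split; [constructor|]; auto.
  - symmetry in EA. apply map_eq_cons in EA as (a & A' & -> & <- & <-).
    destruct (IH A' eq_refl) as (Hq & Yq & H1 & <- & <-).
    exists (a :: Hq), Yq. split; [constructor|]; auto.
Qed.

Lemma splice_lift_unique Hq Yq A : splice Hq Yq A -> forall Hq' Yq', splice Hq' Yq' A ->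
  map P Hq = map P Hq' -> map P Yq = map P Yq' -> Hq = Hq' /\ Yq = Yq'.
Proof.
  induction 1 as [h Y R HP | h H Y R HS IH]; intros Hq' Yq' S2 EH EY;
    inversion S2 as [h' Y' R' HP' | h' H' Y' R' HS']; subst;
    simpl in EH; apply cons_inj in EH as [Eh EH].
  - destruct (pre_comp_lift_unique HP HP' Eh EY). subst. auto.
  - destruct H'; [inversion HS' | discriminate].
  - destruct H; [inversion HS | discriminate].
  - destruct (IH _ _ HS' EH EY). subst. auto.
Qed.

Lemma plug_lift k G H K : plug k G H K -> forall A, K = map P A ->
  exists B Ga, plug k B Ga A /\ map P B = G /\ map P Ga = H.
Proof.
  induction 1 as [g0 G H R K HS HP | k g G H K HP IH]; intros A EA; subst.
  - destruct (pre_comp_lift HP) as (b & Rq & H1 & <- & ER).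
    destruct (splice_lift HS (eq_sym ER)) as (Ga & Gq & H2 & <- & <-).
    exists (b :: Gq), Ga. split; [econstructor; eauto|]; auto.
  - symmetry in EA. apply map_eq_cons in EA as (a & A' & -> & <- & <-).
    destruct (IH A' eq_refl) as (B & Ga & H1 & <- & <-).
    exists (a :: B), Ga. split; [constructor|]; auto.
Qed.

Lemma plug_lift_unique k B Ga A : plug k B Ga A -> forall B' Ga', plug k B' Ga' A ->
  map P B = map P B' -> map P Ga = map P Ga' -> B = B' /\ Ga = Ga'.
Proof.
  induction 1 as [g0 G H R K HS HP | k g G H K HP IH]; intros B' Ga' S2 EB EGa;
    inversion S2 as [g0' G' H' R' K' HS' HP' | k' g' G' H' K' HP']; subst;
    simpl in EB; apply cons_inj in EB as [Eg EB].
  - assert (ER : map P R = map P R').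
    { apply (splice_fun (splice_map HS)). rewrite EGa, EB. apply splice_map. assumption. }
    destruct (pre_comp_lift_unique HP HP' Eg ER). subst.
    destruct (splice_lift_unique HS HS' EGa EB). subst. auto.
  - destruct (IH _ _ HP' EB EGa). subst. auto.
Qed.

End Image.

(* The candidate factorisations [(beta, gamma)] quantified over in [ULF_opmor]:
   [beta : Op D (l1 ++ c :: l2) out] and [gamma : Op D l' c]. *)
Definition factor_pair (D : OperadData) : Type :=
  { x : list (Col D) * Col D * list (Col D) * Col D * list (Col D) &
    (Op D (fst (fst (fst (fst x))) ++ snd (fst (fst (fst x))) :: snd (fst (fst x)))
          (snd (fst x))
     * Op D (snd x) (snd (fst (fst (fst x)))))%type }.

Definition prefix_len (D : OperadData) (s : factor_pair D) : nat :=
  length (fst (fst (fst (fst (projT1 s))))).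

Lemma factor_pair_eq (C : Category) (s s' : factor_pair (W C)) :
  prefix_len s = prefix_len s' ->
  op_arrows (fst (projT2 s)) = op_arrows (fst (projT2 s')) ->
  op_arrows (snd (projT2 s)) = op_arrows (snd (projT2 s')) -> s = s'.
Proof.
  destruct s as [[[[[l1 c] l2] o] l'] [b g]], s' as [[[[[l1' c'] l2'] o'] l''] [b' g']].
  unfold prefix_len; simpl. intros Hl Eb Eg.
  apply op_arrows_inj in Eb, Eg.
  pose proof (f_equal (@projT1 _ _) Eb) as Ebt. pose proof (f_equal (@projT1 _ _) Eg) as Egt.
  injection Ebt as Ebt Eo. injection Egt as El' Ec.
  destruct (app_cons_inj Hl Ebt) as (El1 & _ & El2). subst.
  apply inj_pair2 in Eb, Eg. subst. reflexivity.
Qed.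

Lemma factor_pair_of_plug (C : Category) k (B Ga A : list (Arr C)) : plug k B Ga A ->
  exists s : factor_pair (W C),
    prefix_len s = k /\ op_arrows (fst (projT2 s)) = B /\ op_arrows (snd (projT2 s)) = Ga.
Proof.
  intro HP. destruct (plug_shape HP) as (b0 & bs & g0 & gs & l1 & l2 & -> & -> & E & <-).
  pose proof (arrows_chain_of_arrows bs b0) as Eb.
  revert Eb. generalize (chain_of_arrows b0 bs). rewrite E. intros beta Eb.
  exists (existT _ (l1, (arr_src g0, arr_tgt (last_arr g0 gs)), l2,
                   (arr_src b0, arr_tgt (last_arr b0 bs)), gaps g0 gs)
            (beta, chain_of_arrows g0 gs)).
  unfold op_arrows, prefix_len; simpl. rewrite arrows_chain_of_arrows. auto.
Qed.

Lemma W_map_ULF (Q C : Category) (p : Functor Q C) : ULF_functor p -> ULF_opmor (W_map p).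
Proof.
  intros Hp l out alpha L1 c L2 o L' g h E. cbv zeta beta.
  assert (Hplug : plug (length L1) (op_arrows g) (op_arrows h)
                       (map (arrmap p) (op_arrows alpha))).
  { rewrite <- op_arrows_W_map, (mkOp_op_arrows E). apply op_arrows_ocomp. }
  destruct (plug_lift Hp Hplug eq_refl) as (B & Ga & HBGa & HB & HGa).
  destruct (factor_pair_of_plug HBGa) as (s & Hlen & Hbeta & Hgamma).
  exists s. split; [split; [|split; [|split]]|].
  - exact Hlen.
  - apply op_arrows_inj. symmetry. apply (plug_fun HBGa).
    rewrite <- Hbeta, <- Hgamma, <- Hlen. apply op_arrows_ocomp.
  - apply op_arrows_inj. rewrite op_arrows_W_map, Hbeta. exact HB.
  - apply op_arrows_inj. rewrite op_arrows_W_map, Hgamma. exact HGa.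
  - intros s' (Hlen' & Ecomp & Eg & Eh).
    apply mkOp_op_arrows in Ecomp, Eg, Eh. rewrite op_arrows_W_map in Eg, Eh.
    pose proof (op_arrows_ocomp (fst (projT2 s')) (snd (projT2 s'))) as HP'.
    rewrite Hlen', Ecomp in HP'.
    destruct (plug_lift_unique Hp HP' HBGa) as [Eb' Eg'].
    { etransitivity; [exact Eg | symmetry; exact HB]. }
    { etransitivity; [exact Eh | symmetry; exact HGa]. }
    apply factor_pair_eq; [exact (eq_trans Hlen' (eq_sym Hlen)) | |].
    + rewrite Hbeta. exact Eb'.
    + rewrite Hgamma. exact Eg'.
Qed.

Lemma finite_fiber_map (X Y : Type) (f : X -> Y) :
  (forall y, finite_fiber f y) -> forall ys, finite_fiber (map f) ys.
Proof.
  intros Hf ys. induction ys as [|y ys [L HL]].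
  - exists [[]]. intros [|x xs] E; [left; reflexivity | discriminate].
  - destruct (Hf y) as [l Hl].
    exists (flat_map (fun x => map (cons x) L) l).
    intros [|x xs] E; [discriminate|]. simpl in E. apply cons_inj in E as [Ex Exs].
    apply in_flat_map. exists x. split; [auto | apply in_map; auto].
Qed.

Lemma finite_fiber_pair (X Y : Type) (f : X -> Y) :
  (forall y, finite_fiber f y) ->
  forall yy, finite_fiber (fun xx : X * X => (f (fst xx), f (snd xx))) yy.
Proof.
  intros Hf [y1 y2]. destruct (Hf y1) as [l1 H1], (Hf y2) as [l2 H2].
  exists (list_prod l1 l2). intros [x1 x2] E. injection E as E1 E2. apply in_prod; auto.
Qed.

Lemma W_map_finitary (Q C : Category) (p : Functor Q C) :
  finitary_functor p -> finitary_opmor (W_map p).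
Proof.
  intros [Hob Harr]. split; [exact (finite_fiber_pair Hob)|].
  intros t. destruct (finite_fiber_map Harr (op_arrows (projT2 t))) as [LL HLL].
  exists (flat_map (@ops_of_arrows Q) LL). intros [[l c] x] <-.
  apply in_flat_map. exists (op_arrows x). split; [|apply In_ops_of_arrows].
  apply HLL. symmetry. apply op_arrows_W_map.
Qed.

Theorem mainTheorem5 (Q C : Category) (p : Functor Q C) :
  (ULF_functor p -> ULF_opmor (W_map p)) /\
  (finitary_functor p -> finitary_opmor (W_map p)).
Proof. split; [apply W_map_ULF | apply W_map_finitary]. Qed.
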